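(* Let $n\ge1$, $\gamma>1$, $\rho\in(0,1/n)$, $\theta>1$, $t\in[0,n]$, $\vartheta\in(0,1)$, and let $h:[0,1]\to[1,\infty)$ be differentiable, increasing and concave with $h(0)=1$, $h(1)=\bar h>1$; assume $n\frac{\gamma-1}{\gamma}<1$, $\bar h^{1/\gamma}>\frac1{1-n\rho}$ and $\frac{h'(x)}{\gamma h(x)}>\frac{n\rho}{1-n\rho x}$ for all $x\in[0,1]$. Let $\tau_1=\frac{h'(0)}{\gamma}-\rho$ and $\tau_2=\big[1+\big(\frac{h'(1)}{\gamma\bar h}-\frac{\rho}{1-n\rho}\big)^{-1}\big]^{-1}$, and in the region $\tau_2(1-\vartheta)<\theta\frac tn<\tau_1(1-\vartheta)$ let $\hat x\in(0,1)$ be the solution of $$\Big(\frac{h'(x)}{\gamma h(x)}-\frac{\rho}{1-n\rho x}\Big)\Big(1-\vartheta-\theta\frac{t}{n}x\Big)=\theta\frac{t}{n}.$$ Then (1) $\hat x$ is decreasing in $\vartheta$, $\theta$, $t$ and $\rho$; (2) for every $n\ge3$, $\hat x$ is increasing in $n$.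
   Context: $\hat x$ is the symmetric interior equilibrium amount of adulterant chosen by sellers on an e-commerce platform under preemptive economically motivated adulteration; $\vartheta$ is the platform's take rate, $\theta$ the penalty intensity, $t$ the number of randomly inspected sellers out of $n$ sellers, $\rho$ consumers' quality consciousness, $\gamma$ price sensitivity, $h$ the quality improvement from adulteration. *)

From Stdlib Require Import Reals.
Open Scope R_scope.

(* [hd x] is the derivative of [h] at [x] relative to the domain [0,1]
   (one-sided at the endpoints 0 and 1), as for h : [0,1] -> [1,oo). *)
Definition deriv_on01 (h hd : R -> R) : Prop :=
  forall x, 0 <= x <= 1 ->
    limit1_in (fun y => (h y - h x) / (y - x))
              (fun y => 0 <= y <= 1 /\ y <> x) (hd x) x.

Definition h_assumptions (h hd : R -> R) : Prop :=
  deriv_on01 h hd /\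
  (forall x, 0 <= x <= 1 -> 1 <= h x) /\
  (forall x y, 0 <= x <= 1 -> 0 <= y <= 1 -> x < y -> h x < h y) /\
  (forall x y l, 0 <= x <= 1 -> 0 <= y <= 1 -> 0 <= l <= 1 ->
     l * h x + (1 - l) * h y <= h (l * x + (1 - l) * y)) /\
  h 0 = 1 /\ 1 < h 1.

Definition tau1 (gam rho : R) (hd : R -> R) : R := hd 0 / gam - rho.

Definition tau2 (n : nat) (gam rho : R) (h hd : R -> R) : R :=
  / (1 + / (hd 1 / (gam * h 1) - rho / (1 - INR n * rho))).

Definition admissible (n : nat) (gam rho th t vt : R) (h hd : R -> R) : Prop :=
  (1 <= n)%nat /\ 1 < gam /\ 0 < rho < / INR n /\ 1 < th /\
  0 <= t <= INR n /\ 0 < vt < 1 /\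
  INR n * ((gam - 1) / gam) < 1 /\
  / (1 - INR n * rho) < Rpower (h 1) (/ gam) /\
  (forall x, 0 <= x <= 1 ->
     INR n * rho / (1 - INR n * rho * x) < hd x / (gam * h x)) /\
  tau2 n gam rho h hd * (1 - vt) < th * (t / INR n) /\
  th * (t / INR n) < tau1 gam rho hd * (1 - vt).

Definition is_xhat (n : nat) (gam rho th t vt : R) (h hd : R -> R) (x : R) : Prop :=
  0 < x < 1 /\
  (hd x / (gam * h x) - rho / (1 - INR n * rho * x))
    * (1 - vt - th * (t / INR n) * x) = th * (t / INR n).

From Stdlib Require Import Reals Lra.
Open Scope R_scope.

(* Dividing the defining equation by 1 - vt - c x, where c = th t / n, turns it into
   marginal benefit = marginal cost:  h'(x) / (gam h(x)) = c / (1 - vt - c x) + rho / (1 - n rho x).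
   The left side decreases in x (h is increasing and concave), the right side increases.
   Raising vt, th, t or rho raises the marginal cost pointwise, so the crossing point moves
   left.  Raising n lowers c = th t / n and raises rho / (1 - n rho x); at a fixed x the
   first effect wins as soon as 2 rho (1 - vt) <= c, and for n >= 3 this is implied by the
   lower boundary tau2 (1 - vt) < c of the region, so the crossing point moves right. *)

Lemma frac_le_compat a1 a2 b1 b2 :
  0 <= a1 <= a2 -> 0 < b2 <= b1 -> a1 / b1 <= a2 / b2.
Proof.
  intros Ha Hb; unfold Rdiv.
  apply Rmult_le_compat; try lra.
  - apply Rlt_le, Rinv_0_lt_compat; lra.
  - apply Rinv_le_contravar; lra.
Qed.

Lemma frac_lt_compat a1 a2 b1 b2 :
  0 <= a1 <= a2 -> 0 < a2 -> 0 < b2 <= b1 -> a1 < a2 \/ b2 < b1 -> a1 / b1 < a2 / b2.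
Proof.
  intros Ha Ha2 Hb [Hlt | Hlt]; unfold Rdiv.
  - apply Rlt_le_trans with (a2 * / b1).
    + apply Rmult_lt_compat_r; [apply Rinv_0_lt_compat |]; lra.
    + apply Rmult_le_compat_l, Rinv_le_contravar; lra.
  - apply Rle_lt_trans with (a2 * / b1).
    + apply Rmult_le_compat_r; [apply Rlt_le, Rinv_0_lt_compat |]; lra.
    + apply Rmult_lt_compat_l, Rinv_lt_contravar; [| apply Rmult_lt_0_compat |]; lra.
Qed.

Section ConcaveTangent.

Variables h hd : R -> R.
Hypothesis h_deriv : deriv_on01 h hd.
Hypothesis h_concave : forall x y l, 0 <= x <= 1 -> 0 <= y <= 1 -> 0 <= l <= 1 ->
  l * h x + (1 - l) * h y <= h (l * x + (1 - l) * y).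

Lemma concave_tangent_above p z :
  0 <= p <= 1 -> 0 <= z <= 1 -> h z <= h p + hd p * (z - p).
Proof.
  intros Hp Hz.
  destruct (Req_dec z p) as [-> | Hzp]; [lra |].
  apply Rnot_lt_le; intro Hgap.
  set (e := h z - h p - hd p * (z - p)).
  assert (Hd : 0 < Rabs (z - p)) by (apply Rabs_pos_lt; lra).
  destruct (h_deriv p Hp (e / Rabs (z - p))) as [alp [Halp Hnear]].
  { apply Rdiv_lt_0_compat; unfold e; lra. }
  set (s := alp / (alp + Rabs (z - p))).
  assert (Hs : 0 < s < 1).
  { unfold s; split; [apply Rdiv_lt_0_compat; lra |].
    apply (Rmult_lt_reg_r (alp + Rabs (z - p))); [lra |].
    unfold Rdiv; rewrite Rmult_assoc, Rinv_l; lra. }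
  assert (Hsd : s * Rabs (z - p) < alp).
  { unfold s; apply (Rmult_lt_reg_r (alp + Rabs (z - p))); [lra |].
    field_simplify; [nra | lra]. }
  set (w := s * z + (1 - s) * p).
  assert (Hwp : w - p = s * (z - p)) by (unfold w; ring).
  assert (Hchord : s * h z + (1 - s) * h p <= h w) by (apply h_concave; lra).
  set (q := (h w - h p) / (w - p)).
  assert (Hq : q * (w - p) = h w - h p).
  { unfold q; field; rewrite Hwp; apply Rmult_integral_contrapositive; lra. }
  assert (Hslope : h z - h p <= q * (z - p)).
  { apply (Rmult_le_reg_l s); [lra |].
    rewrite <- Rmult_assoc, (Rmult_comm s q), Rmult_assoc, <- Hwp, Hq; lra. }
  specialize (Hnear w) as Hqw; simpl in Hqw; unfold R_dist in Hqw; fold q in Hqw.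
  assert (Hclose : Rabs (q - hd p) < e / Rabs (z - p)).
  { apply Hqw; split.
    - split; [unfold w; nra | intro Hw; rewrite Hw in Hwp; nra].
    - rewrite Hwp, Rabs_mult, Rabs_pos_eq; lra. }
  assert (Habs : Rabs ((q - hd p) * (z - p)) < e).
  { rewrite Rabs_mult. apply (Rmult_lt_reg_r (/ Rabs (z - p))); [apply Rinv_0_lt_compat; lra |].
    rewrite Rmult_assoc, Rinv_r; lra. }
  apply Rabs_def2 in Habs. unfold e in Habs. lra.
Qed.

Lemma deriv_antitone x y : 0 <= x -> x <= y -> y <= 1 -> hd y <= hd x.
Proof.
  intros Hx Hxy Hy.
  destruct (Req_dec x y) as [-> | Hne]; [lra |].
  pose proof (concave_tangent_above x y ltac:(lra) ltac:(lra)).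
  pose proof (concave_tangent_above y x ltac:(lra) ltac:(lra)).
  nra.
Qed.

End ConcaveTangent.

Definition marginal_benefit (gam : R) (h hd : R -> R) (x : R) : R := hd x / (gam * h x).

Definition marginal_cost (N rho c V x : R) : R := c / (V - c * x) + rho / (1 - N * rho * x).

Lemma marginal_cost_le N rho c V x y :
  0 <= N -> 0 <= rho -> 0 <= c -> 0 <= x <= y -> 0 < V - c * y -> N * rho * y < 1 ->
  marginal_cost N rho c V x <= marginal_cost N rho c V y.
Proof.
  intros HN Hr Hc Hxy HV Hy; unfold marginal_cost.
  assert (0 <= N * rho) by nra.
  apply Rplus_le_compat; apply frac_le_compat; nra.
Qed.

Lemma marginal_cost_lt_params N rho1 rho2 c1 c2 V1 V2 x :
  0 <= N -> 0 < x -> 0 <= rho1 <= rho2 -> 0 < c1 <= c2 -> V2 <= V1 ->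
  0 < V2 - c2 * x -> N * rho2 * x < 1 -> rho1 < rho2 \/ c1 < c2 \/ V2 < V1 ->
  marginal_cost N rho1 c1 V1 x < marginal_cost N rho2 c2 V2 x.
Proof.
  intros HN Hx Hr Hc HV Hpen Hcon Hstrict; unfold marginal_cost.
  assert (Hpen_le : 0 < V2 - c2 * x <= V1 - c1 * x) by nra.
  assert (N * rho1 <= N * rho2) by nra.
  assert (Hcon_le : 0 < 1 - N * rho2 * x <= 1 - N * rho1 * x) by nra.
  destruct Hstrict as [Hr12 | Hcv].
  - apply Rplus_le_lt_compat; [apply frac_le_compat | apply frac_lt_compat]; lra.
  - apply Rplus_lt_le_compat; [apply frac_lt_compat | apply frac_le_compat]; try lra.
    destruct Hcv; [left | right]; nra.
Qed.

Lemma marginal_cost_lt_N N1 N2 rho c1 c2 V x :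
  0 < x <= 1 -> 0 < rho -> 0 < N1 < N2 -> N2 * rho < 1 / 2 ->
  0 < c1 -> c1 * N1 = c2 * N2 -> 2 * rho * V <= c1 -> 0 < V - c1 * x ->
  marginal_cost N2 rho c2 V x < marginal_cost N1 rho c1 V x.
Proof.
  intros Hx Hr HN Hsmall Hc1 Hc Hlow Hpen; unfold marginal_cost.
  assert (Hc2 : c2 = c1 * N1 / N2) by (rewrite Hc; field; lra).
  subst c2.
  set (a1 := V - c1 * x); set (a2 := V - c1 * N1 / N2 * x).
  set (D1 := 1 - N1 * rho * x); set (D2 := 1 - N2 * rho * x).
  assert (Ha1 : 0 < a1 < V) by (unfold a1; nra).
  assert (Ha2 : a1 < a2 < V).
  { unfold a1, a2; split.
    - assert (c1 * N1 / N2 < c1) by (apply (Rmult_lt_reg_r N2); [lra |]; field_simplify; nra).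
      nra.
    - assert (0 < c1 * N1 / N2) by (apply Rdiv_lt_0_compat; nra). nra. }
  assert (HD : 1 / 2 < D2 < D1).
  { assert (N1 * rho < N2 * rho) by nra.
    assert (0 < N2 * rho) by nra.
    unfold D1, D2; nra. }
  (* the penalty term falls faster in N than the consciousness term rises *)
  assert (Hkey : rho * rho * x * (N1 * N2) * (a1 * a2) < V * (c1 * N1) * (D1 * D2)).
  { assert (HK : rho * x * N2 <= 2 * (D1 * D2)) by nra.
    assert (Ha : a1 * a2 < V * V) by nra.
    assert (0 < rho * rho * x * (N1 * N2)) by (repeat apply Rmult_lt_0_compat; lra).
    apply Rlt_le_trans with (rho * rho * x * (N1 * N2) * (V * V)); [nra |].
    replace (rho * rho * x * (N1 * N2) * (V * V)) with ((rho * V * V * N1) * (rho * x * N2)) by ring.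
    apply Rle_trans with ((rho * V * V * N1) * (2 * (D1 * D2))).
    - apply Rmult_le_compat_l; [| exact HK]. repeat apply Rmult_le_pos; lra.
    - replace (rho * V * V * N1 * (2 * (D1 * D2))) with ((2 * rho * V) * (V * N1 * (D1 * D2))) by ring.
      replace (V * (c1 * N1) * (D1 * D2)) with (c1 * (V * N1 * (D1 * D2))) by ring.
      apply Rmult_le_compat_r; [repeat apply Rmult_le_pos |]; lra. }
  assert (Hdiff : c1 / a1 + rho / D1 - (c1 * N1 / N2 / a2 + rho / D2)
      = (V * (c1 * N1) * (D1 * D2) - rho * rho * x * (N1 * N2) * (a1 * a2)) * (N2 - N1)
        / (N1 * N2 * (a1 * a2) * (D1 * D2))).
  { assert (N2 * a2 = V * N2 - c1 * N1 * x) by (unfold a2; field; lra).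
    unfold a1, a2, D1, D2 in *; field; repeat split; nra. }
  assert (0 < (V * (c1 * N1) * (D1 * D2) - rho * rho * x * (N1 * N2) * (a1 * a2)) * (N2 - N1)
        / (N1 * N2 * (a1 * a2) * (D1 * D2))).
  { apply Rdiv_lt_0_compat; [apply Rmult_lt_0_compat | repeat apply Rmult_lt_0_compat]; lra. }
  lra.
Qed.

Lemma crossing_lt (F G1 G2 : R -> R) x1 x2 :
  (x1 <= x2 -> F x2 <= F x1 /\ G1 x1 <= G1 x2 /\ G1 x2 < G2 x2) ->
  F x1 = G1 x1 -> F x2 = G2 x2 -> x2 < x1.
Proof.
  intros Hcmp H1 H2; apply Rnot_le_lt; intro Hle.
  destruct (Hcmp Hle) as [HF [HG1 HG12]]; lra.
Qed.

Section Equilibrium.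

Variables h hd : R -> R.
Hypothesis h_ok : h_assumptions h hd.

Lemma deriv1_lt_h1 : hd 1 < h 1.
Proof.
  destruct h_ok as [Hd [_ [_ [Hc [H0 H1]]]]].
  pose proof (concave_tangent_above h hd Hd Hc 1 0 ltac:(lra) ltac:(lra)); lra.
Qed.

Lemma marginal_benefit_antitone gam x y :
  0 < gam -> 0 <= x -> x <= y -> y <= 1 -> 0 < hd y ->
  marginal_benefit gam h hd y <= marginal_benefit gam h hd x.
Proof.
  intros Hg Hx Hxy Hy Hdy; unfold marginal_benefit.
  destruct h_ok as [Hd [Hge1 [Hinc [Hc _]]]].
  assert (Hhx : 1 <= h x) by (apply Hge1; lra).
  assert (Hhxy : h x <= h y).
  { destruct (Req_dec x y) as [-> | Hne]; [lra |]. apply Rlt_le, Hinc; lra. }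
  pose proof (deriv_antitone h hd Hd Hc x y Hx Hxy Hy).
  apply frac_le_compat; split; nra.
Qed.

Lemma admissible_nrho_lt_half {n gam rho th t vt} :
  admissible n gam rho th t vt h hd -> INR n * rho < 1 / 2.
Proof.
  intros [Hn [Hg [[Hr0 Hr1] [_ [_ [_ [_ [_ [Hall _]]]]]]]]].
  assert (HN : 1 <= INR n) by (apply (le_INR 1); exact Hn).
  assert (HNr : INR n * rho < 1).
  { apply (Rmult_lt_compat_l (INR n)) in Hr1; [| lra]. rewrite Rinv_r in Hr1; lra. }
  specialize (Hall 1 ltac:(lra)); rewrite Rmult_1_r in Hall.
  pose proof deriv1_lt_h1.
  destruct h_ok as [_ [Hge1 _]]; assert (1 <= h 1) by (apply Hge1; lra).
  assert (hd 1 / (gam * h 1) < 1).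
  { apply (Rmult_lt_reg_r (gam * h 1)); [nra |]. field_simplify; nra. }
  assert (Hw : INR n * rho / (1 - INR n * rho) * (1 - INR n * rho) = INR n * rho) by (field; lra).
  nra.
Qed.

Lemma tau2_gt {n gam rho th t vt} :
  admissible n gam rho th t vt h hd -> (INR n - 1) * rho / (1 - rho) < tau2 n gam rho h hd.
Proof.
  intros Had; pose proof (admissible_nrho_lt_half Had) as Hsmall.
  destruct Had as [Hn [Hg [[Hr0 _] [_ [_ [_ [_ [_ [Hall _]]]]]]]]].
  assert (HN : 1 <= INR n) by (apply (le_INR 1); exact Hn).
  specialize (Hall 1 ltac:(lra)); rewrite Rmult_1_r in Hall.
  unfold tau2.
  set (F1 := hd 1 / (gam * h 1)) in *.
  set (a := F1 - rho / (1 - INR n * rho)).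
  assert (Ha : (INR n - 1) * rho < a * (1 - INR n * rho)).
  { replace (a * (1 - INR n * rho)) with (F1 * (1 - INR n * rho) - rho)
      by (unfold a; field; lra).
    apply (Rmult_lt_compat_r (1 - INR n * rho)) in Hall; [| lra].
    replace (INR n * rho / (1 - INR n * rho) * (1 - INR n * rho)) with (INR n * rho) in Hall
      by (field; lra).
    lra. }
  assert (Ha0 : 0 < a) by nra.
  replace (/ (1 + / a)) with (a / (1 + a)) by (field; lra).
  assert (Hdiff : a / (1 + a) - (INR n - 1) * rho / (1 - rho)
                  = (a * (1 - INR n * rho) - (INR n - 1) * rho) / ((1 + a) * (1 - rho)))
    by (field; nra).
  assert (0 < (a * (1 - INR n * rho) - (INR n - 1) * rho) / ((1 + a) * (1 - rho))).
  { apply Rdiv_lt_0_compat; [lra | apply Rmult_lt_0_compat; nra]. }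
  lra.
Qed.

Lemma xhat_marginal_eq {n gam rho th t vt x} :
  admissible n gam rho th t vt h hd -> is_xhat n gam rho th t vt h hd x ->
  0 < th * (t / INR n) /\ 0 < hd x /\ 0 < 1 - vt - th * (t / INR n) * x /\
  marginal_benefit gam h hd x = marginal_cost (INR n) rho (th * (t / INR n)) (1 - vt) x.
Proof.
  intros Had [Hx Heq].
  pose proof (admissible_nrho_lt_half Had) as Hsmall.
  pose proof (tau2_gt Had) as Htau.
  destruct Had as [Hn [Hg [[Hr0 _] [_ [_ [Hvt [_ [_ [Hall [Hreg _]]]]]]]]]].
  assert (HN : 1 <= INR n) by (apply (le_INR 1); exact Hn).
  specialize (Hall x ltac:(lra)).
  destruct h_ok as [_ [Hge1 _]]; assert (Hhx : 1 <= h x) by (apply Hge1; lra).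
  set (c := th * (t / INR n)) in *.
  set (F := hd x / (gam * h x)) in *.
  set (g := rho / (1 - INR n * rho * x)) in *.
  assert (Hc : 0 < c).
  { assert (0 <= (INR n - 1) * rho / (1 - rho)) by (apply Rle_mult_inv_pos; nra). nra. }
  assert (Hcrowd : 0 < 1 - INR n * rho * x) by nra.
  assert (Hgle : g <= INR n * rho / (1 - INR n * rho * x)) by (apply frac_le_compat; nra).
  assert (HgN : 0 < INR n * rho / (1 - INR n * rho * x)) by (apply Rdiv_lt_0_compat; nra).
  assert (Hpen : 0 < 1 - vt - c * x) by nra.
  repeat split; try lra.
  - replace (hd x) with (F * (gam * h x)) by (unfold F; field; nra).
    apply Rmult_lt_0_compat; nra.
  - unfold marginal_benefit, marginal_cost; fold F g.
    replace (c / (1 - vt - c * x)) with (F - g); [ring |].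
    apply (Rmult_eq_reg_r (1 - vt - c * x)); [rewrite Heq; field |]; lra.
Qed.

Lemma xhat_decreasing {n gam rho1 rho2 th1 th2 t1 t2 vt1 vt2 x1 x2} :
  admissible n gam rho1 th1 t1 vt1 h hd -> admissible n gam rho2 th2 t2 vt2 h hd ->
  is_xhat n gam rho1 th1 t1 vt1 h hd x1 -> is_xhat n gam rho2 th2 t2 vt2 h hd x2 ->
  rho1 <= rho2 -> th1 <= th2 -> t1 <= t2 -> vt1 <= vt2 ->
  rho1 < rho2 \/ th1 < th2 \/ t1 < t2 \/ vt1 < vt2 -> x2 < x1.
Proof.
  intros Had1 Had2 Hx1 Hx2 Hrho Hth Ht Hvt Hstrict.
  destruct (xhat_marginal_eq Had1 Hx1) as [Hc1 [_ [_ Heq1]]].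
  destruct (xhat_marginal_eq Had2 Hx2) as [_ [Hd2 [Hpen2 Heq2]]].
  pose proof (admissible_nrho_lt_half Had1).
  pose proof (admissible_nrho_lt_half Had2).
  destruct Had1 as [Hn [Hg [[Hr1 _] [Hth1 _]]]].
  destruct Hx1 as [Hx1 _], Hx2 as [Hx2 _].
  assert (HN : 1 <= INR n) by (apply (le_INR 1); exact Hn).
  set (N := INR n) in *.
  assert (Hu : 0 < t1 / N <= t2 / N).
  { split; [nra | apply Rmult_le_compat_r; [apply Rlt_le, Rinv_0_lt_compat |]; lra]. }
  set (c1 := th1 * (t1 / N)) in *; set (c2 := th2 * (t2 / N)) in *.
  assert (Hc : c1 <= c2) by (unfold c1, c2; nra).
  assert (Hcs : th1 < th2 \/ t1 < t2 -> c1 < c2).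
  { intros [Hlt | Hlt]; unfold c1, c2; [nra |].
    assert (t1 / N < t2 / N) by (apply Rmult_lt_compat_r; [apply Rinv_0_lt_compat |]; lra).
    nra. }
  apply (crossing_lt (marginal_benefit gam h hd)
           (marginal_cost N rho1 c1 (1 - vt1)) (marginal_cost N rho2 c2 (1 - vt2)));
    [intro Hle; repeat split | exact Heq1 | exact Heq2].
  - apply marginal_benefit_antitone; lra.
  - apply marginal_cost_le; nra.
  - apply marginal_cost_lt_params; nra.
Qed.

Lemma xhat_increasing_in_n {n1 n2 : nat} {gam rho th t vt x1 x2} :
  (3 <= n1)%nat -> (n1 < n2)%nat ->
  admissible n1 gam rho th t vt h hd -> admissible n2 gam rho th t vt h hd ->
  is_xhat n1 gam rho th t vt h hd x1 -> is_xhat n2 gam rho th t vt h hd x2 -> x1 < x2.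
Proof.
  intros H3 H12 Had1 Had2 Hx1 Hx2.
  destruct (xhat_marginal_eq Had1 Hx1) as [Hc1 [Hd1 [Hpen1 Heq1]]].
  destruct (xhat_marginal_eq Had2 Hx2) as [_ [_ [_ Heq2]]].
  pose proof (admissible_nrho_lt_half Had2) as Hsmall.
  pose proof (tau2_gt Had1) as Htau.
  destruct Had1 as [_ [Hg [[Hr _] [Hth [_ [Hvt [_ [_ [_ [Hreg _]]]]]]]]]].
  destruct Hx1 as [Hx1 _], Hx2 as [Hx2 _].
  assert (HN1 : 3 <= INR n1) by (pose proof (le_INR 3 n1 H3) as H3R; simpl in H3R; lra).
  assert (HN12 : INR n1 < INR n2) by (apply lt_INR; exact H12).
  set (N1 := INR n1) in *; set (N2 := INR n2) in *.
  set (c1 := th * (t / N1)) in *; set (c2 := th * (t / N2)) in *.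
  assert (Hcc : c1 * N1 = c2 * N2) by (unfold c1, c2; field; lra).
  assert (Hc21 : c2 < c1) by nra.
  (* for n >= 3 the lower boundary of the region lies above 2 rho *)
  assert (Hlow : 2 * rho * (1 - vt) <= c1).
  { assert (2 * rho <= (N1 - 1) * rho / (1 - rho)).
    { apply (Rmult_le_reg_r (1 - rho)); [nra |]. field_simplify; nra. }
    nra. }
  apply (crossing_lt (marginal_benefit gam h hd)
           (marginal_cost N2 rho c2 (1 - vt)) (marginal_cost N1 rho c1 (1 - vt)));
    [intro Hle; repeat split | exact Heq2 | exact Heq1].
  - apply marginal_benefit_antitone; lra.
  - apply marginal_cost_le; nra.
  - apply marginal_cost_lt_N; nra.
Qed.

End Equilibrium.

Theorem proposition2 (h hd : R -> R) :
  h_assumptions h hd ->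
  (* (1a) decreasing in vartheta *)
  (forall n gam rho th t vt1 vt2 x1 x2,
     admissible n gam rho th t vt1 h hd -> admissible n gam rho th t vt2 h hd ->
     is_xhat n gam rho th t vt1 h hd x1 -> is_xhat n gam rho th t vt2 h hd x2 ->
     vt1 < vt2 -> x2 < x1) /\
  (* (1b) decreasing in theta *)
  (forall n gam rho th1 th2 t vt x1 x2,
     admissible n gam rho th1 t vt h hd -> admissible n gam rho th2 t vt h hd ->
     is_xhat n gam rho th1 t vt h hd x1 -> is_xhat n gam rho th2 t vt h hd x2 ->
     th1 < th2 -> x2 < x1) /\
  (* (1c) decreasing in t *)
  (forall n gam rho th t1 t2 vt x1 x2,
     admissible n gam rho th t1 vt h hd -> admissible n gam rho th t2 vt h hd ->
     is_xhat n gam rho th t1 vt h hd x1 -> is_xhat n gam rho th t2 vt h hd x2 ->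
     t1 < t2 -> x2 < x1) /\
  (* (1d) decreasing in rho *)
  (forall n gam rho1 rho2 th t vt x1 x2,
     admissible n gam rho1 th t vt h hd -> admissible n gam rho2 th t vt h hd ->
     is_xhat n gam rho1 th t vt h hd x1 -> is_xhat n gam rho2 th t vt h hd x2 ->
     rho1 < rho2 -> x2 < x1) /\
  (* (2) increasing in n for n >= 3 *)
  (forall (n1 n2 : nat) gam rho th t vt x1 x2,
     (3 <= n1)%nat -> (n1 < n2)%nat ->
     admissible n1 gam rho th t vt h hd -> admissible n2 gam rho th t vt h hd ->
     is_xhat n1 gam rho th t vt h hd x1 -> is_xhat n2 gam rho th t vt h hd x2 ->
     x1 < x2).
Proof.
  intros h_ok; repeat split.
  1-4: intros * Had1 Had2 Hx1 Hx2 Hlt;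
       apply (xhat_decreasing h hd h_ok Had1 Had2 Hx1 Hx2); lra.
  intros * H3 Hlt Had1 Had2 Hx1 Hx2.
  exact (xhat_increasing_in_n h hd h_ok H3 Hlt Had1 Had2 Hx1 Hx2).
Qed.
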